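(* Let $N\geq1$ be an integer, $t\in\mathbb R$ fixed, and $s\geq0$. Define $$\mathbf B_2^Q(u,v):=\begin{pmatrix}B_2(\mathcal Pu,\mathcal Qv)+B_2(\mathcal Qu,v)\\ B_2(\mathcal Pu,\mathcal Qv)+B_2(\mathcal Qu,v)\end{pmatrix}-\begin{pmatrix}B_2(\mathcal Pu,\mathcal Qu)+B_2(\mathcal Qu,u)\\ B_2(\mathcal Pv,\mathcal Qv)+B_2(\mathcal Qv,v)\end{pmatrix}.$$ Then $\mathbf B_2^Q$ maps $(\dot H^s)^2$ into $(\dot H^s)^2$ and there is a constant $C(s)$, independent of $N$ and $t$, such that for all $(u,v),(\tilde u,\tilde v)\in(\dot H^s)^2$, $$\|\mathbf B_2^Q(u,v)\|_{(\dot H^s)^2}\leq C(s)\frac1N\|(u,v)\|^2_{(\dot H^s)^2},$$ $$\|\mathbf B_2^Q(u,v)-\mathbf B_2^Q(\tilde u,\tilde v)\|_{(\dot H^s)^2}\leq C(s)\frac1N\|(u,v)-(\tilde u,\tilde v)\|_{(\dot H^s)^2}\big(\|(u,v)\|_{(\dot H^s)^2}+\|(\tilde u,\tilde v)\|_{(\dot H^s)^2}\big).$$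
   Context: $\mathbb Z_0=\mathbb Z\setminus\{0\}$. Mean-zero real-valued functions on $\mathbb T=[0,2\pi]$ are identified with their Fourier coefficients $(u_k)_{k\in\mathbb Z_0}$, $\overline{u_k}=u_{-k}$. For $s\in\mathbb R$, $\|u\|_{\dot H^s}^2=\sum_{k\in\mathbb Z_0}|k|^{2s}|u_k|^2$, $\dot H^s$ the space of such $u$ with finite norm, $\|(u,v)\|^2_{(\dot H^s)^2}=\|u\|^2_{\dot H^s}+\|v\|^2_{\dot H^s}$. $\mathcal P$ is the projection onto modes $|k|\leq N$: $(\mathcal Pu)_k=u_k$ if $|k|\leq N$, $0$ otherwise; $\mathcal Q=I-\mathcal P$ is the projection onto modes $|k|>N$. The bilinear operator $B_2$ is defined by $B_2(\phi,\psi)_k:=\frac16\sum_{k_1+k_2=k}\frac{e^{3ikk_1k_2t}}{k_1k_2}\phi_{k_1}\psi_{k_2}$, $k\in\mathbb Z_0$ (sum over $k_1,k_2\in\mathbb Z_0$). *)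

From Stdlib Require Import Reals ZArith.
From Coquelicot Require Import Coquelicot.
Open Scope R_scope.

(* Fourier coefficients of a mean-zero function on T, indexed by Z
   (the value at index 0 is required to be 0: mean zero). *)
Definition coeffs := Z -> C.

(* Sum over Z \ {0} of a complex family, pairing the modes n and -n
   (n >= 1); used only for absolutely summable families. *)
Definition zsum (g : Z -> C) : C :=
  (Series (fun n : nat => fst (g (Z.of_nat (S n))) + fst (g (- Z.of_nat (S n))%Z)),
   Series (fun n : nat => snd (g (Z.of_nat (S n))) + snd (g (- Z.of_nat (S n))%Z))).

Definition Hs_term (s : R) (u : coeffs) (n : nat) : R :=
  Rpower (INR (S n)) (2 * s) *
    (Cmod (u (Z.of_nat (S n))) ^ 2 + Cmod (u (- Z.of_nat (S n))%Z) ^ 2).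

Definition Hs_norm2 (s : R) (u : coeffs) : R := Series (Hs_term s u).
Definition Hs_norm (s : R) (u : coeffs) : R := sqrt (Hs_norm2 s u).

(* membership in \dot H^s: mean zero, real-valued (conj u_k = u_{-k}),
   and finite norm *)
Definition in_Hs (s : R) (u : coeffs) : Prop :=
  u 0%Z = 0%C /\ (forall k : Z, Cconj (u k) = u (- k)%Z) /\ ex_series (Hs_term s u).

Definition Hs2_norm (s : R) (u v : coeffs) : R :=
  sqrt (Hs_norm2 s u + Hs_norm2 s v).

Definition projP (N : nat) (u : coeffs) : coeffs :=
  fun k => if (Z.abs k <=? Z.of_nat N)%Z then u k else 0%C.
Definition projQ (N : nat) (u : coeffs) : coeffs :=
  fun k => if (Z.abs k <=? Z.of_nat N)%Z then 0%C else u k.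

Definition cexpi (theta : R) : C := (cos theta, sin theta).

(* B_2(phi,psi)_k = 1/6 sum_{k1+k2=k, k1,k2 in Z0} e^{3 i k k1 k2 t}/(k1 k2) phi_{k1} psi_{k2},
   for k in Z0; set to 0 at k = 0 (mean-zero convention). *)
Definition B2 (t : R) (phi psi : coeffs) : coeffs :=
  fun k =>
    if (k =? 0)%Z then 0%C else
    Cmult (RtoC (1 / 6))
      (zsum (fun k1 =>
         if (k1 =? k)%Z then 0%C else
         let k2 := (k - k1)%Z in
         Cmult (Cmult (cexpi (3 * IZR k * IZR k1 * IZR k2 * t))
                      (RtoC (/ (IZR k1 * IZR k2))))
               (Cmult (phi k1) (psi k2)))).

Definition caddf (f g : coeffs) : coeffs := fun k => Cplus (f k) (g k).
Definition csubf (f g : coeffs) : coeffs := fun k => Cminus (f k) (g k).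

Definition B2Q1 (N : nat) (t : R) (u v : coeffs) : coeffs :=
  csubf (caddf (B2 t (projP N u) (projQ N v)) (B2 t (projQ N u) v))
        (caddf (B2 t (projP N u) (projQ N u)) (B2 t (projQ N u) u)).
Definition B2Q2 (N : nat) (t : R) (u v : coeffs) : coeffs :=
  csubf (caddf (B2 t (projP N u) (projQ N v)) (B2 t (projQ N u) v))
        (caddf (B2 t (projP N v) (projQ N v)) (B2 t (projQ N v) v)).

(** Each of the eight bilinear terms of [B2Q1], [B2Q2] has one argument supported on the modes
    [|k| > N].  Since [|B2(phi, psi)_k| <= 1/6 sum_j |phi_j| |psi_(k-j)| / |j (k-j)|] and
    [|k|^s <= 2^s |j|^s |k-j|^s], Cauchy-Schwarz in [j] followed by Young's inequality for
    convolutions in [k] bounds the [H^s] norm of such a term by the [H^s] norms of the arguments,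
    times the [l^2] norm of the kernel: the factor [1/j^2] attached to the high-frequency argument
    contributes [1/N^2], the other one [sum 1/j^2 <= 4].  Bilinearity then gives the Lipschitz
    bound, and the quadratic bound is the Lipschitz bound against [(0, 0)]. *)

From Stdlib Require Import Reals ZArith Lia Lra Psatz.
From Coquelicot Require Import Coquelicot.
Open Scope R_scope.

(** * Series of nonnegative reals *)


Lemma sum_n_nonneg (a : nat -> R) (M : nat) : (forall n, 0 <= a n) -> 0 <= sum_n a M.
Proof.
  intros Ha; induction M as [|M IH]; [rewrite sum_O; auto|].
  rewrite sum_Sn; unfold plus; simpl; specialize (Ha (S M)); lra.
Qed.

Lemma sum_n_le_Series (a : nat -> R) (M : nat) :
  (forall n, 0 <= a n) -> ex_series a -> sum_n a M <= Series a.
Proof.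
  intros Ha He; apply is_lim_seq_incr_compare; [apply (Series_correct a He)|].
  intro n; rewrite sum_Sn; unfold plus; simpl; specialize (Ha (S n)); lra.
Qed.

Lemma Series_nonneg (a : nat -> R) : (forall n, 0 <= a n) -> 0 <= Series a.
Proof.
  intros Ha; unfold Series.
  assert (Hle := Lim_seq_le_loc (fun _ => 0) (sum_n a)); rewrite Lim_seq_const in Hle.
  destruct (Lim_seq (sum_n a)); simpl in *; try lra.
  apply Hle; exists 0%nat; intros; apply sum_n_nonneg; auto.
Qed.

Lemma ex_series_of_sum_n_le (a : nat -> R) (B : R) :
  (forall n, 0 <= a n) -> (forall M, sum_n a M <= B) -> ex_series a /\ Series a <= B.
Proof.
  intros Ha Hb.
  assert (Hinc : forall n, sum_n a n <= sum_n a (S n)).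
  { intro n; rewrite sum_Sn; unfold plus; simpl; specialize (Ha (S n)); lra. }
  destruct (ex_finite_lim_seq_incr _ B Hinc Hb) as [l Hl].
  split; [exists l; exact Hl|].
  rewrite (is_series_unique a l Hl).
  assert (Hle := Lim_seq_le_loc (sum_n a) (fun _ => B)).
  rewrite Lim_seq_const, (is_lim_seq_unique _ _ Hl) in Hle.
  apply Hle; exists 0%nat; auto.
Qed.

Lemma ex_series_ext_R (a b : nat -> R) : (forall n, a n = b n) -> ex_series a -> ex_series b.
Proof. apply (@ex_series_ext R_AbsRing R_NormedModule). Qed.

Lemma ex_series_plus_R (a b : nat -> R) :
  ex_series a -> ex_series b -> ex_series (fun n => a n + b n).
Proof. apply (@ex_series_plus R_AbsRing R_NormedModule). Qed.

Lemma ex_series_scal_R (c : R) (a : nat -> R) : ex_series a -> ex_series (fun n => c * a n).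
Proof. apply (@ex_series_scal_l R_AbsRing R_NormedModule). Qed.

Lemma Series_le_ex (a b : nat -> R) :
  (forall n, 0 <= a n <= b n) -> ex_series b -> ex_series a /\ Series a <= Series b.
Proof.
  intros Hab Hb; split; [|apply Series_le; auto].
  apply (@ex_series_le R_AbsRing R_CompleteNormedModule _ b); auto.
  intro n; change (Rabs (a n) <= b n); rewrite Rabs_pos_eq; apply Hab.
Qed.

Lemma Series_sum_n (F : nat -> nat -> R) (M : nat) : (forall n, ex_series (F n)) ->
  ex_series (fun m => sum_n (fun n => F n m) M) /\
  sum_n (fun n => Series (F n)) M = Series (fun m => sum_n (fun n => F n m) M).
Proof.
  intros HF; induction M as [|M [He Hs]].
  - rewrite sum_O; split.
    + apply (ex_series_ext_R (F 0%nat)); auto; intro; rewrite sum_O; auto.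
    + apply Series_ext; intro; rewrite sum_O; auto.
  - assert (Hx : forall m, sum_n (fun n => F n m) (S M) = sum_n (fun n => F n m) M + F (S M) m)
      by (intro; rewrite sum_Sn; auto).
    rewrite sum_Sn; split.
    + apply (ex_series_ext_R (fun m => sum_n (fun n => F n m) M + F (S M) m));
        [intro; rewrite Hx; auto|apply ex_series_plus_R; auto].
    + rewrite (Series_ext _ _ Hx), Series_plus, Hs; auto.
Qed.

(** * Sums over the nonzero integers *)

(** The sum of [h] over [Z \ {0}] is [Series (zpair h)]: modes [n+1] and [-(n+1)] are paired,
    as in [zsum] and [Hs_term]. *)
Definition zpair (h : Z -> R) (n : nat) : R := h (Z.of_nat (S n)) + h (- Z.of_nat (S n))%Z.

Lemma zpair_le (h h' : Z -> R) :
  (forall j, j <> 0%Z -> 0 <= h j <= h' j) -> forall n, 0 <= zpair h n <= zpair h' n.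
Proof.
  intros H n; unfold zpair.
  pose proof (H (Z.of_nat (S n)) ltac:(lia)); pose proof (H (- Z.of_nat (S n))%Z ltac:(lia)); lra.
Qed.

Lemma zpair_nonneg (h : Z -> R) : (forall j, 0 <= h j) -> forall n, 0 <= zpair h n.
Proof. intros H n; apply Rplus_le_le_0_compat; apply H. Qed.

Lemma Series_zpair_le (h h' : Z -> R) :
  (forall j, j <> 0%Z -> 0 <= h j <= h' j) -> ex_series (zpair h') ->
  ex_series (zpair h) /\ Series (zpair h) <= Series (zpair h').
Proof. intros H; apply Series_le_ex, zpair_le, H. Qed.

Lemma Series_zpair_nonneg (h : Z -> R) : (forall j, 0 <= h j) -> 0 <= Series (zpair h).
Proof. intros H; apply Series_nonneg, zpair_nonneg, H. Qed.

Lemma Series_zpair_plus (h1 h2 : Z -> R) : ex_series (zpair h1) -> ex_series (zpair h2) ->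
  ex_series (zpair (fun j => h1 j + h2 j)) /\
  Series (zpair (fun j => h1 j + h2 j)) = Series (zpair h1) + Series (zpair h2).
Proof.
  intros E1 E2.
  assert (Hext : forall n, zpair h1 n + zpair h2 n = zpair (fun j => h1 j + h2 j) n)
    by (intro; unfold zpair; ring).
  split; [apply (ex_series_ext_R _ _ Hext), ex_series_plus_R; auto|].
  rewrite <- Series_plus by auto; apply Series_ext; intro; rewrite Hext; auto.
Qed.

Fixpoint isum (g : Z -> R) (a : Z) (n : nat) : R :=
  match n with O => 0 | S m => isum g a m + g (a + Z.of_nat m)%Z end.

Lemma isum_app (g : Z -> R) (a : Z) (n m : nat) :
  isum g a (n + m) = isum g a n + isum g (a + Z.of_nat n) m.
Proof.
  induction m as [|m IH]; [simpl; rewrite Nat.add_0_r; lra|].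
  rewrite Nat.add_succ_r; simpl; rewrite IH.
  replace (a + Z.of_nat (n + m))%Z with (a + Z.of_nat n + Z.of_nat m)%Z by lia; lra.
Qed.

Lemma isum_nonneg (g : Z -> R) (a : Z) (n : nat) : (forall j, 0 <= g j) -> 0 <= isum g a n.
Proof. intros H; induction n; simpl; [lra|]; specialize (H (a + Z.of_nat n)%Z); lra. Qed.

Lemma isum_subinterval_le (g : Z -> R) (a b : Z) (n m : nat) :
  (forall j, 0 <= g j) -> (b <= a)%Z -> (a + Z.of_nat n <= b + Z.of_nat m)%Z ->
  isum g a n <= isum g b m.
Proof.
  intros Hg Hba Hnm; set (p := Z.to_nat (a - b)).
  replace m with (p + (n + (m - p - n)))%nat by (unfold p; lia).
  rewrite isum_app, isum_app; replace (b + Z.of_nat p)%Z with a by (unfold p; lia).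
  pose proof (isum_nonneg g b p Hg); pose proof (isum_nonneg g (a + Z.of_nat n) (m - p - n) Hg).
  lra.
Qed.

Lemma sum_n_zpair_shift_isum (g : Z -> R) (c : Z) (M : nat) :
  sum_n (zpair (fun j => g (c + j)%Z)) M + g c = isum g (c - Z.of_nat (S M)) (2 * M + 3).
Proof.
  induction M as [|M IH].
  - rewrite sum_O; unfold zpair; simpl.
    replace (c - 1 + 0)%Z with (c + - 1)%Z by lia; replace (c - 1 + 1)%Z with c by lia.
    replace (c - 1 + 2)%Z with (c + 1)%Z by lia; lra.
  - rewrite sum_Sn; unfold plus; simpl (AbelianMonoid.plus _ _).
    replace (2 * S M + 3)%nat with (1 + ((2 * M + 3) + 1))%nat by lia.
    assert (Hone : forall a, isum g a 1 = g a) by (intro; simpl; rewrite Z.add_0_r; lra).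
    rewrite isum_app, isum_app, !Hone.
    replace (c - Z.of_nat (S (S M)) + Z.of_nat 1)%Z with (c - Z.of_nat (S M))%Z by lia.
    rewrite <- IH; unfold zpair.
    replace (c - Z.of_nat (S (S M)))%Z with (c + - Z.of_nat (S (S M)))%Z by lia.
    replace (c - Z.of_nat (S M) + Z.of_nat (2 * M + 3))%Z with (c + Z.of_nat (S (S M)))%Z by lia.
    lra.
Qed.

(* Every interval sum lies inside a symmetric one, whose sum is a partial sum of
   [Series (zpair g)]; this bounds single terms and translates by the full series. *)
Section NonnegZ0Sums.
Variable g : Z -> R.
Hypothesis g_nonneg : forall j, 0 <= g j.
Hypothesis g_0 : g 0%Z = 0.
Hypothesis g_summable : ex_series (zpair g).

Lemma isum_le_Series (a : Z) (n : nat) : isum g a n <= Series (zpair g).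
Proof.
  set (M := (n + Z.abs_nat a)%nat).
  assert (Hsym := sum_n_zpair_shift_isum g 0 M).
  rewrite g_0, Rplus_0_r in Hsym.
  rewrite (sum_n_ext _ (zpair g)) in Hsym by (intro; unfold zpair; f_equal).
  eapply Rle_trans; [|apply (sum_n_le_Series _ M (zpair_nonneg g g_nonneg) g_summable)].
  rewrite Hsym; apply isum_subinterval_le; auto; unfold M; lia.
Qed.

Lemma le_Series_zpair (j : Z) : g j <= Series (zpair g).
Proof. assert (H := isum_le_Series j 1); simpl in H; rewrite Z.add_0_r in H; lra. Qed.

Lemma sum_n_zpair_shift_le (c : Z) (M : nat) :
  sum_n (zpair (fun j => g (c + j)%Z)) M <= Series (zpair g).
Proof.
  rewrite <- (Rplus_0_r (sum_n _ M)).
  eapply Rle_trans; [apply Rplus_le_compat_l, (g_nonneg c)|].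
  rewrite sum_n_zpair_shift_isum; apply isum_le_Series.
Qed.

Lemma Series_zpair_shift_le (c : Z) :
  ex_series (zpair (fun j => g (c + j)%Z)) /\
  Series (zpair (fun j => g (c + j)%Z)) <= Series (zpair g).
Proof.
  apply ex_series_of_sum_n_le; [apply zpair_nonneg; auto|apply sum_n_zpair_shift_le].
Qed.

Lemma Series_zpair_reflect_le (c : Z) :
  ex_series (zpair (fun j => g (c - j)%Z)) /\
  Series (zpair (fun j => g (c - j)%Z)) <= Series (zpair g).
Proof.
  assert (Hext : forall n, zpair (fun j => g (c + j)%Z) n = zpair (fun j => g (c - j)%Z) n)
    by (intro; unfold zpair; rewrite Rplus_comm; f_equal; f_equal; lia).
  destruct (Series_zpair_shift_le c) as [E H]; split; [apply (ex_series_ext_R _ _ Hext E)|].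
  rewrite <- (Series_ext _ _ Hext); auto.
Qed.

End NonnegZ0Sums.

Definition zconv (f g : Z -> R) (k : Z) : R := Series (zpair (fun j => f j * g (k - j)%Z)).

Section Young.
Variables f g : Z -> R.
Hypotheses (f_nonneg : forall j, 0 <= f j) (g_nonneg : forall j, 0 <= g j).
Hypothesis g_0 : g 0%Z = 0.
Hypotheses (f_summable : ex_series (zpair f)) (g_summable : ex_series (zpair g)).

Lemma ex_series_zconv (k : Z) : ex_series (zpair (fun j => f j * g (k - j)%Z)).
Proof.
  apply (Series_zpair_le _ (fun j => Series (zpair g) * f j)).
  - intros j _; pose proof (f_nonneg j); pose proof (g_nonneg (k - j)%Z).
    pose proof (le_Series_zpair g g_nonneg g_0 g_summable (k - j)); split; nra.
  - apply (ex_series_ext_R (fun n => Series (zpair g) * zpair f n)); [intro; unfold zpair; ring|].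
    apply ex_series_scal_R; auto.
Qed.

Lemma zconv_nonneg (k : Z) : 0 <= zconv f g k.
Proof. apply Series_zpair_nonneg; intro; apply Rmult_le_pos; auto. Qed.

(* Exchange the two sums on a finite range of [k], then sum the translates of [g] first. *)
Lemma sum_n_zconv_le (M : nat) :
  sum_n (zpair (zconv f g)) M <= Series (zpair f) * Series (zpair g).
Proof.
  set (H := fun n m => zpair (fun j => f j * g (Z.of_nat (S n) - j)%Z) m
                     + zpair (fun j => f j * g (- Z.of_nat (S n) - j)%Z) m).
  assert (EH : forall n, ex_series (H n)) by (intro; apply ex_series_plus_R; apply ex_series_zconv).
  rewrite (sum_n_ext _ (fun n => Series (H n)))
    by (intro; unfold zpair at 1, zconv, H; rewrite Series_plus; auto; apply ex_series_zconv).
  destruct (Series_sum_n H M EH) as [_ ->].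
  rewrite Rmult_comm, <- Series_scal_l; apply Series_le;
    [|apply ex_series_scal_R; auto].
  intro m; set (a := Z.of_nat (S m)); split.
  - apply sum_n_nonneg; intro; apply Rplus_le_le_0_compat; apply zpair_nonneg;
      intro; apply Rmult_le_pos; auto.
  - assert (Hsplit : forall n, H n m = f a * zpair (fun j => g (- a + j)%Z) n
                                    + f (- a)%Z * zpair (fun j => g (a + j)%Z) n).
    { intro n; unfold H, zpair; fold a.
      replace (Z.of_nat (S n) - a)%Z with (- a + Z.of_nat (S n))%Z by lia.
      replace (Z.of_nat (S n) - - a)%Z with (a + Z.of_nat (S n))%Z by lia.
      replace (- Z.of_nat (S n) - a)%Z with (- a + - Z.of_nat (S n))%Z by lia.
      replace (- Z.of_nat (S n) - - a)%Z with (a + - Z.of_nat (S n))%Z by lia; ring. }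
    rewrite (sum_n_ext _ _ _ Hsplit), (sum_n_plus (G := R_AbelianMonoid)).
    rewrite !(sum_n_mult_l (K := R_Ring)).
    pose proof (f_nonneg a); pose proof (f_nonneg (- a)%Z).
    pose proof (sum_n_zpair_shift_le g g_nonneg g_0 g_summable (- a) M).
    pose proof (sum_n_zpair_shift_le g g_nonneg g_0 g_summable a M).
    unfold plus, mult; simpl (AbelianMonoid.plus _ _).
    change (Ring.mult _ _ ?x ?y) with (x * y).
    replace (zpair f m) with (f a + f (- a)%Z) by reflexivity.
    rewrite Rmult_plus_distr_l, (Rmult_comm _ (f a)), (Rmult_comm _ (f (- a)%Z)).
    apply Rplus_le_compat; apply Rmult_le_compat_l; auto.
Qed.

Lemma Series_zconv_le :
  ex_series (zpair (zconv f g)) /\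
  Series (zpair (zconv f g)) <= Series (zpair f) * Series (zpair g).
Proof. apply ex_series_of_sum_n_le; [apply zpair_nonneg, zconv_nonneg|apply sum_n_zconv_le]. Qed.

End Young.

Lemma sqr_le_mul_of_amgm (P X Y : R) : 0 <= P -> 0 <= X -> 0 <= Y ->
  (forall l, 0 < l -> 2 * l * P <= l ^ 2 * X + Y) -> P ^ 2 <= X * Y.
Proof.
  intros HP HX HY H.
  destruct (Req_dec P 0) as [->|HP0]; [nra|].
  destruct (Req_dec X 0) as [->|HX0].
  - specialize (H ((Y + 1) / P) ltac:(apply Rdiv_lt_0_compat; lra)).
    replace (2 * ((Y + 1) / P) * P) with (2 * (Y + 1)) in H by (field; lra); nra.
  - specialize (H (P / X) ltac:(apply Rdiv_lt_0_compat; lra)).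
    replace (2 * (P / X) * P) with (2 * (P ^ 2 / X)) in H by (field; lra).
    replace ((P / X) ^ 2 * X) with (P ^ 2 / X) in H by (field; lra).
    assert (P ^ 2 / X <= Y) by lra.
    apply (Rmult_le_compat_r X) in H0; [|lra].
    replace (P ^ 2 / X * X) with (P ^ 2) in H0 by (field; lra); lra.
Qed.

Lemma Series_zpair_cauchy_schwarz (x y : Z -> R) :
  (forall j, 0 <= x j) -> (forall j, 0 <= y j) ->
  ex_series (zpair (fun j => x j ^ 2)) -> ex_series (zpair (fun j => y j ^ 2)) ->
  ex_series (zpair (fun j => x j * y j)) /\
  Series (zpair (fun j => x j * y j)) ^ 2
    <= Series (zpair (fun j => x j ^ 2)) * Series (zpair (fun j => y j ^ 2)).
Proof.
  intros Hx Hy Ex Ey.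
  assert (Hamgm : forall l, 0 < l -> forall j, j <> 0%Z ->
            0 <= 2 * l * (x j * y j) <= l ^ 2 * x j ^ 2 + y j ^ 2).
  { intros l Hl j _; pose proof (Hx j); pose proof (Hy j); split.
    { apply Rmult_le_pos; [lra|]; apply Rmult_le_pos; auto. }
    pose proof (Rle_0_sqr (l * x j - y j)); unfold Rsqr in *; nra. }
  assert (Hsum : forall l, 0 < l -> ex_series (zpair (fun j => l ^ 2 * x j ^ 2 + y j ^ 2))).
  { intros l _; apply (ex_series_ext_R (fun n => l ^ 2 * zpair (fun j => x j ^ 2) n
                                             + zpair (fun j => y j ^ 2) n));
      [intro; unfold zpair; ring|apply ex_series_plus_R; auto; apply ex_series_scal_R; auto]. }
  assert (Exy : ex_series (zpair (fun j => x j * y j))).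
  { apply (ex_series_ext_R (fun n => / 2 * zpair (fun j => 2 * 1 * (x j * y j)) n));
      [intro; unfold zpair; field|apply ex_series_scal_R].
    apply (Series_zpair_le _ _ (Hamgm 1 Rlt_0_1)), Hsum; lra. }
  split; auto.
  apply sqr_le_mul_of_amgm; try (apply Series_zpair_nonneg; intro; try apply pow2_ge_0;
                                 apply Rmult_le_pos; auto).
  intros l Hl.
  rewrite <- Series_scal_l, <- Series_scal_l, <- Series_plus;
    [|apply ex_series_scal_R; auto|auto].
  rewrite (Series_ext (fun n => 2 * l * _)
             (zpair (fun j => 2 * l * (x j * y j)))) by (intro; unfold zpair; ring).
  rewrite (Series_ext (fun n => l ^ 2 * _ + _)
             (zpair (fun j => l ^ 2 * x j ^ 2 + y j ^ 2))) by (intro; unfold zpair; ring).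
  apply Series_zpair_le; auto.
Qed.

(** * Weighted norms and the bilinear majorant *)

Definition weight (s : R) (k : Z) : R := Rpower (IZR (Z.abs k)) s.

Definition wsq (s : R) (a : Z -> R) (j : Z) : R := (weight s j * a j) ^ 2.

Definition wnorm2 (s : R) (a : Z -> R) : R := Series (zpair (wsq s a)).

Lemma weight_pos (s : R) (k : Z) : 0 < weight s k.
Proof. apply exp_pos. Qed.

Lemma wsq_nonneg (s : R) (a : Z -> R) (j : Z) : 0 <= wsq s a j.
Proof. apply pow2_ge_0. Qed.

Lemma wnorm2_nonneg (s : R) (a : Z -> R) : 0 <= wnorm2 s a.
Proof. apply Series_zpair_nonneg, wsq_nonneg. Qed.

(* From [|k1 + k2| <= 2 |k1| |k2|] for nonzero integers. *)
Lemma weight_add_le (s : R) (k1 k2 : Z) :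
  0 <= s -> k1 <> 0%Z -> k2 <> 0%Z -> (k1 + k2 <> 0)%Z ->
  weight s (k1 + k2) <= Rpower 2 s * weight s k1 * weight s k2.
Proof.
  intros Hs H1 H2 H3; unfold weight.
  assert (0 < IZR (Z.abs k1)) by (apply IZR_lt; lia).
  assert (0 < IZR (Z.abs k2)) by (apply IZR_lt; lia).
  rewrite Rpower_mult_distr, Rpower_mult_distr by nra.
  apply Rle_Rpower_l; auto; split; [apply IZR_lt; lia|].
  rewrite <- !mult_IZR; apply IZR_le; nia.
Qed.

Definition inv_sq (j : Z) : R := (/ IZR j) ^ 2.

Lemma inv_sq_nonneg (j : Z) : 0 <= inv_sq j.
Proof. apply pow2_ge_0. Qed.

Lemma inv_sq_0 : inv_sq 0 = 0.
Proof. unfold inv_sq; rewrite Rinv_0; ring. Qed.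

Lemma Series_zpair_inv_sq_le : ex_series (zpair inv_sq) /\ Series (zpair inv_sq) <= 4.
Proof.
  assert (Hterm : forall n, zpair inv_sq n = 2 / (INR n + 1) ^ 2).
  { intro n; unfold zpair, inv_sq; rewrite opp_IZR, <- INR_IZR_INZ, S_INR.
    pose proof (pos_INR n); field; lra. }
  apply ex_series_of_sum_n_le; [apply zpair_nonneg, inv_sq_nonneg|].
  (* telescoping: [2 / (n+1)^2 <= 2 / n - 2 / (n+1)] *)
  assert (Hb : forall M, sum_n (zpair inv_sq) M <= 4 - 2 / (INR M + 1)).
  { induction M as [|M IH]; [rewrite sum_O, Hterm; simpl; lra|].
    rewrite sum_Sn; unfold plus; simpl (AbelianMonoid.plus _ _); rewrite Hterm, S_INR.
    set (x := INR M) in *; assert (0 <= x) by apply pos_INR.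
    assert (0 <= 2 / ((x + 1) * (x + 2) ^ 2)) by (apply Rle_mult_inv_pos; nra).
    replace (2 / (x + 1 + 1) ^ 2) with (2 / (x + 1) - 2 / (x + 1 + 1) - 2 / ((x + 1) * (x + 2) ^ 2))
      by (field; lra); lra. }
  intro M; specialize (Hb M); assert (0 <= 2 / (INR M + 1)); [|lra].
  apply Rle_mult_inv_pos; [lra|]; pose proof (pos_INR M); lra.
Qed.

Lemma inv_sq_le_high (N : nat) (j : Z) :
  (1 <= N)%nat -> (Z.of_nat N < Z.abs j)%Z -> inv_sq j <= / INR N ^ 2.
Proof.
  intros HN Hj; unfold inv_sq.
  assert (IZR j <> 0) by (intro E; apply eq_IZR in E; lia).
  rewrite pow_inv; apply Rinv_le_contravar; [apply pow_lt, lt_0_INR; lia|].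
  rewrite <- (pow2_abs (IZR j)); apply pow_incr; split; [apply pos_INR|].
  rewrite Rabs_Zabs, INR_IZR_INZ; apply IZR_le; lia.
Qed.

Lemma wnorm2_inv_sq_high_le (s : R) (N : nat) (c : Z -> R) : (1 <= N)%nat ->
  (forall j, (Z.abs j <= Z.of_nat N)%Z -> c j = 0) ->
  ex_series (zpair (wsq s c)) ->
  ex_series (zpair (fun j => wsq s c j * inv_sq j)) /\
  Series (zpair (fun j => wsq s c j * inv_sq j)) <= / INR N ^ 2 * wnorm2 s c.
Proof.
  intros HN Hc Ec; unfold wnorm2; rewrite <- Series_scal_l.
  rewrite (Series_ext (fun n => _ * _) (zpair (fun j => / INR N ^ 2 * wsq s c j)))
    by (intro; unfold zpair; ring).
  apply Series_zpair_le.
  - intros j _; pose proof (wsq_nonneg s c j); pose proof (inv_sq_nonneg j); split; [nra|].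
    destruct (Z_le_gt_dec (Z.abs j) (Z.of_nat N)) as [Hlow|Hhigh].
    + unfold wsq; rewrite Hc by auto; nra.
    + pose proof (inv_sq_le_high N j HN ltac:(lia)); nra.
  - apply (ex_series_ext_R (fun n => / INR N ^ 2 * zpair (wsq s c) n));
      [intro; unfold zpair; ring|apply ex_series_scal_R; auto].
Qed.

(* Since [/ 0 = 0], the kernel vanishes at the excluded modes [x = 0] and [y = 0]. *)
Definition kernel (x y : Z) : R := Rabs (/ (IZR x * IZR y)).

Lemma kernel_nonneg (x y : Z) : 0 <= kernel x y.
Proof. apply Rabs_pos. Qed.

Lemma kernel_0_l (y : Z) : kernel 0 y = 0.
Proof. unfold kernel; rewrite Rmult_0_l, Rinv_0, Rabs_R0; auto. Qed.

Lemma kernel_0_r (x : Z) : kernel x 0 = 0.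
Proof. unfold kernel; rewrite Rmult_0_r, Rinv_0, Rabs_R0; auto. Qed.

Lemma kernel_sq (x y : Z) : kernel x y ^ 2 = inv_sq x * inv_sq y.
Proof. unfold kernel, inv_sq; rewrite pow2_abs, Rinv_mult; ring. Qed.

(** Up to the factor [1/3], [B2_majorant |phi| |psi|] bounds [|B2 t phi psi|] mode by mode. *)
Definition B2_majorant (a b : Z -> R) (k : Z) : R :=
  Series (zpair (fun j => a j * b (k - j)%Z * kernel j (k - j)%Z)).

Definition B2_majorant_ex (a b : Z -> R) (k : Z) : Prop :=
  ex_series (zpair (fun j => a j * b (k - j)%Z * kernel j (k - j)%Z)).

Lemma B2_majorant_nonneg (a b : Z -> R) (k : Z) :
  (forall j, 0 <= a j) -> (forall j, 0 <= b j) -> 0 <= B2_majorant a b k.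
Proof.
  intros; apply Series_zpair_nonneg; intro.
  apply Rmult_le_pos; [apply Rmult_le_pos|apply kernel_nonneg]; auto.
Qed.

Lemma Series_zpair_sq_le_zconv (V f g : Z -> R) (c : R) : 0 <= c ->
  (forall j, 0 <= f j) -> (forall j, 0 <= g j) -> g 0%Z = 0 ->
  ex_series (zpair f) -> ex_series (zpair g) ->
  (forall k, k <> 0%Z -> V k ^ 2 <= c * zconv f g k) ->
  ex_series (zpair (fun k => V k ^ 2)) /\
  Series (zpair (fun k => V k ^ 2)) <= c * (Series (zpair f) * Series (zpair g)).
Proof.
  intros Hc Hf Hg Hg0 Ef Eg HV.
  destruct (Series_zconv_le f g Hf Hg Hg0 Ef Eg) as [Econv Hconv].
  destruct (Series_zpair_le (fun k => V k ^ 2) (fun k => c * zconv f g k)) as [EV HVle].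
  - intros k Hk; split; [apply pow2_ge_0|auto].
  - apply (ex_series_ext_R (fun n => c * zpair (zconv f g) n)); [intro; unfold zpair; ring|].
    apply ex_series_scal_R; auto.
  - split; auto; eapply Rle_trans; [apply HVle|].
    rewrite (Series_ext _ (fun n => c * zpair (zconv f g) n)), Series_scal_l
      by (intro; unfold zpair; ring).
    apply Rmult_le_compat_l; auto.
Qed.

Section MajorantBound.
Variables (s : R) (a b : Z -> R).
Hypothesis s_nonneg : 0 <= s.
Hypotheses (a_nonneg : forall j, 0 <= a j) (b_nonneg : forall j, 0 <= b j).
(* Needed because [weight s 0 = 1]: the translates of [wsq s b] see the mode [0]. *)
Hypothesis b_0 : b 0%Z = 0.
Hypotheses (a_summable : ex_series (zpair (wsq s a))) (b_summable : ex_series (zpair (wsq s b))).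

Lemma weight_mul_term_le (k j : Z) : k <> 0%Z ->
  weight s k * (a j * b (k - j)%Z * kernel j (k - j))
    <= Rpower 2 s * (weight s j * a j * (weight s (k - j) * b (k - j)%Z) * kernel j (k - j)).
Proof.
  intros Hk.
  assert (Hh : 0 <= a j * b (k - j)%Z * kernel j (k - j))
    by (apply Rmult_le_pos; [apply Rmult_le_pos|apply kernel_nonneg]; auto).
  destruct (Z.eq_dec j 0) as [->|Hj]; [rewrite kernel_0_l; lra|].
  destruct (Z.eq_dec (k - j) 0) as [Ekj|Hkj]; [rewrite Ekj, kernel_0_r; lra|].
  assert (Hw := weight_add_le s j (k - j) s_nonneg Hj Hkj ltac:(lia)).
  replace (j + (k - j))%Z with k in Hw by lia.
  apply Rle_trans
    with (Rpower 2 s * weight s j * weight s (k - j) * (a j * b (k - j)%Z * kernel j (k - j)));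
    [apply Rmult_le_compat_r; auto|right; ring].
Qed.

(* The [j]-sum is estimated by Cauchy-Schwarz for any factorisation [x j * y j] of the
   weighted terms; the choice of factorisation is made by the two lemmas below. *)
Lemma weight_B2_majorant_sq_le (k : Z) (x y : Z -> R) : k <> 0%Z ->
  (forall j, 0 <= x j) -> (forall j, 0 <= y j) ->
  (forall j, weight s j * a j * (weight s (k - j) * b (k - j)%Z) * kernel j (k - j) = x j * y j) ->
  ex_series (zpair (fun j => x j ^ 2)) -> ex_series (zpair (fun j => y j ^ 2)) ->
  B2_majorant_ex a b k /\
  (weight s k * B2_majorant a b k) ^ 2
    <= Rpower 2 s ^ 2 * Series (zpair (fun j => x j ^ 2)) * Series (zpair (fun j => y j ^ 2)).
Proof.
  intros Hk Hx Hy Hxy Ex Ey.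
  destruct (Series_zpair_cauchy_schwarz x y Hx Hy Ex Ey) as [Exy Hcs].
  set (h := fun j => a j * b (k - j)%Z * kernel j (k - j)%Z).
  assert (Hh : forall j, 0 <= h j)
    by (intro; apply Rmult_le_pos; [apply Rmult_le_pos|apply kernel_nonneg]; auto).
  assert (Hwk := weight_pos s k); assert (H2s : 0 < Rpower 2 s) by apply exp_pos.
  assert (Hpoint : forall j, j <> 0%Z -> 0 <= weight s k * h j <= Rpower 2 s * (x j * y j))
    by (intros j _; split; [pose proof (Hh j); nra|rewrite <- Hxy; apply weight_mul_term_le; auto]).

  assert (Escaled : ex_series (zpair (fun j => Rpower 2 s * (x j * y j))))
    by (apply (ex_series_ext_R (fun n => Rpower 2 s * zpair (fun j => x j * y j) n));
        [intro; unfold zpair; ring|apply ex_series_scal_R; auto]).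
  destruct (Series_zpair_le _ _ Hpoint Escaled) as [Ewh Hwh].
  split.
  - apply (ex_series_ext_R (fun n => / weight s k * zpair (fun j => weight s k * h j) n));
      [intro; unfold zpair, h; field; lra|apply ex_series_scal_R; auto].
  - assert (HM : 0 <= weight s k * B2_majorant a b k
                   <= Rpower 2 s * Series (zpair (fun j => x j * y j))).
    { unfold B2_majorant; fold h.
      rewrite <- !Series_scal_l.
      rewrite (Series_ext (fun n => weight s k * _) (zpair (fun j => weight s k * h j)))
        by (intro; unfold zpair; ring).
      rewrite (Series_ext (fun n => Rpower 2 s * _) (zpair (fun j => Rpower 2 s * (x j * y j))))
        by (intro; unfold zpair; ring).
      split; auto; apply Series_zpair_nonneg; intro; pose proof (Hh j); nra. }
    apply Rle_trans with ((Rpower 2 s * Series (zpair (fun j => x j * y j))) ^ 2);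
      [apply pow_incr; auto|].
    rewrite Rpow_mult_distr, Rmult_assoc; apply Rmult_le_compat_l; [apply pow2_ge_0|auto].
Qed.

Lemma wnorm2_B2_majorant_le_of_zconv (f g : Z -> R) (c B : R) : 0 <= c ->
  (forall j, 0 <= f j) -> (forall j, 0 <= g j) -> g 0%Z = 0 ->
  ex_series (zpair f) -> ex_series (zpair g) -> Series (zpair f) * Series (zpair g) <= B ->
  (forall k, k <> 0%Z ->
     B2_majorant_ex a b k /\
     (weight s k * B2_majorant a b k) ^ 2 <= c * zconv f g k) ->
  (forall k, k <> 0%Z -> B2_majorant_ex a b k) /\
  ex_series (zpair (wsq s (B2_majorant a b))) /\ wnorm2 s (B2_majorant a b) <= c * B.
Proof.
  intros Hc Hf Hg Hg0 Ef Eg HB Hk; split; [apply Hk|].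
  destruct (Series_zpair_sq_le_zconv (fun k => weight s k * B2_majorant a b k) f g c
              Hc Hf Hg Hg0 Ef Eg) as [E HV]; [apply Hk|].
  split; auto; eapply Rle_trans; [apply HV|]; apply Rmult_le_compat_l; auto.
Qed.

(* In both cases the kernel goes into the Cauchy-Schwarz factor of the high-frequency argument:
   its weight [1/j^2] there is at most [1/N^2], while the other [1/j^2] sums to at most 4. *)
Lemma wnorm2_B2_majorant_high_r (N : nat) : (1 <= N)%nat ->
  (forall j, (Z.abs j <= Z.of_nat N)%Z -> b j = 0) ->
  (forall k, k <> 0%Z -> B2_majorant_ex a b k) /\
  ex_series (zpair (wsq s (B2_majorant a b))) /\
  wnorm2 s (B2_majorant a b) <= Rpower 2 s ^ 2 * wnorm2 s a * (4 * (/ INR N ^ 2 * wnorm2 s b)).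
Proof.
  intros HN Hhigh.
  set (g := fun j => wsq s b j * inv_sq j).
  destruct (wnorm2_inv_sq_high_le s N b HN Hhigh b_summable) as [Eg Hgle]; fold g in Eg, Hgle.
  destruct Series_zpair_inv_sq_le as [Ef Hfle].
  assert (Hg : forall j, 0 <= g j)
    by (intro; apply Rmult_le_pos; [apply wsq_nonneg|apply inv_sq_nonneg]).
  assert (Hg0 : g 0%Z = 0) by (unfold g; rewrite inv_sq_0; ring).
  assert (Hc : 0 <= Rpower 2 s ^ 2 * wnorm2 s a)
    by (apply Rmult_le_pos; [apply pow2_ge_0|apply wnorm2_nonneg]).
  assert (HB : Series (zpair inv_sq) * Series (zpair g) <= 4 * (/ INR N ^ 2 * wnorm2 s b))
    by (apply Rmult_le_compat; auto; apply Series_zpair_nonneg; auto; apply inv_sq_nonneg).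
  apply (wnorm2_B2_majorant_le_of_zconv inv_sq g _ _ Hc inv_sq_nonneg Hg Hg0 Ef Eg HB).
  intros k Hk.
  set (y := fun j => weight s (k - j) * b (k - j)%Z * kernel j (k - j)).
  assert (Hy2 : forall n, zpair (fun j => y j ^ 2) n = zpair (fun j => inv_sq j * g (k - j)%Z) n)
    by (intro; unfold zpair, y, g, wsq; rewrite !Rpow_mult_distr, !kernel_sq; ring).
  assert (Hx : forall j, 0 <= weight s j * a j)
    by (intro; apply Rmult_le_pos; [left; apply weight_pos|auto]).
  assert (Hy : forall j, 0 <= y j) by (intro; unfold y; apply Rmult_le_pos;
    [apply Rmult_le_pos; [left; apply weight_pos|auto]|apply kernel_nonneg]).
  assert (Ey : ex_series (zpair (fun j => y j ^ 2)))
    by (apply (ex_series_ext_R _ _ (fun n => eq_sym (Hy2 n))), ex_series_zconv;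
        auto using inv_sq_nonneg, inv_sq_0).
  destruct (weight_B2_majorant_sq_le k _ y Hk Hx Hy ltac:(intro; unfold y; ring) a_summable Ey)
    as [Eh Hbound].
  split; auto; eapply Rle_trans; [apply Hbound|right].
  rewrite (Series_ext _ _ Hy2); reflexivity.
Qed.

Lemma wnorm2_B2_majorant_high_l (N : nat) : (1 <= N)%nat ->
  (forall j, (Z.abs j <= Z.of_nat N)%Z -> a j = 0) ->
  (forall k, k <> 0%Z -> B2_majorant_ex a b k) /\
  ex_series (zpair (wsq s (B2_majorant a b))) /\
  wnorm2 s (B2_majorant a b) <= Rpower 2 s ^ 2 * wnorm2 s b * ((/ INR N ^ 2 * wnorm2 s a) * 4).
Proof.
  intros HN Hhigh.
  set (f := fun j => wsq s a j * inv_sq j).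
  destruct (wnorm2_inv_sq_high_le s N a HN Hhigh a_summable) as [Ef Hfle]; fold f in Ef, Hfle.
  destruct Series_zpair_inv_sq_le as [Eg Hgle].
  assert (Hf : forall j, 0 <= f j)
    by (intro; apply Rmult_le_pos; [apply wsq_nonneg|apply inv_sq_nonneg]).
  assert (Hc : 0 <= Rpower 2 s ^ 2 * wnorm2 s b)
    by (apply Rmult_le_pos; [apply pow2_ge_0|apply wnorm2_nonneg]).
  assert (HB : Series (zpair f) * Series (zpair inv_sq) <= (/ INR N ^ 2 * wnorm2 s a) * 4)
    by (apply Rmult_le_compat; auto; apply Series_zpair_nonneg; auto; apply inv_sq_nonneg).
  apply (wnorm2_B2_majorant_le_of_zconv f inv_sq _ _ Hc Hf inv_sq_nonneg inv_sq_0 Ef Eg HB).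
  intros k Hk.
  set (x := fun j => weight s j * a j * kernel j (k - j)).
  set (y := fun j => weight s (k - j) * b (k - j)%Z).
  assert (Hx2 : forall n, zpair (fun j => x j ^ 2) n = zpair (fun j => f j * inv_sq (k - j)%Z) n)
    by (intro; unfold zpair, x, f, wsq; rewrite !Rpow_mult_distr, !kernel_sq; ring).
  assert (Hb0 : wsq s b 0 = 0) by (unfold wsq; rewrite b_0; ring).
  destruct (Series_zpair_reflect_le (wsq s b) (wsq_nonneg s b) Hb0 b_summable k) as [Ey Hy2].
  assert (Hx : forall j, 0 <= x j) by (intro; unfold x; apply Rmult_le_pos;
    [apply Rmult_le_pos; [left; apply weight_pos|auto]|apply kernel_nonneg]).
  assert (Hy : forall j, 0 <= y j)
    by (intro; unfold y; apply Rmult_le_pos; [left; apply weight_pos|auto]).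
  assert (Ex : ex_series (zpair (fun j => x j ^ 2)))
    by (apply (ex_series_ext_R _ _ (fun n => eq_sym (Hx2 n))), ex_series_zconv;
        auto using inv_sq_nonneg, inv_sq_0).
  destruct (weight_B2_majorant_sq_le k x y Hk Hx Hy ltac:(intro; unfold x, y; ring) Ex Ey)
    as [Eh Hbound].
  split; auto; eapply Rle_trans; [apply Hbound|].
  rewrite (Series_ext _ _ Hx2); fold (zconv f inv_sq k).
  pose proof (zconv_nonneg f inv_sq Hf inv_sq_nonneg k).
  replace (Rpower 2 s ^ 2 * wnorm2 s b * zconv f inv_sq k)
    with (Rpower 2 s ^ 2 * zconv f inv_sq k * wnorm2 s b) by ring.
  apply Rmult_le_compat_l; auto; apply Rmult_le_pos; [apply pow2_ge_0|auto].
Qed.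

Lemma wnorm2_B2_majorant_le (N : nat) : (1 <= N)%nat ->
  (forall j, (Z.abs j <= Z.of_nat N)%Z -> b j = 0) \/
  (forall j, (Z.abs j <= Z.of_nat N)%Z -> a j = 0) ->
  (forall k, k <> 0%Z -> B2_majorant_ex a b k) /\
  ex_series (zpair (wsq s (B2_majorant a b))) /\
  wnorm2 s (B2_majorant a b) <= 4 * Rpower 2 s ^ 2 / INR N ^ 2 * wnorm2 s a * wnorm2 s b.
Proof.
  intros HN [Hhigh|Hhigh];
    [destruct (wnorm2_B2_majorant_high_r N HN Hhigh) as (? & ? & Hle)
    |destruct (wnorm2_B2_majorant_high_l N HN Hhigh) as (? & ? & Hle)];
    (split; [|split]; auto; eapply Rle_trans; [apply Hle|right; unfold Rdiv; ring]).
Qed.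

End MajorantBound.

(** * Sobolev norms of coefficient sequences *)

Definition cmodf (u : coeffs) (j : Z) : R := Cmod (u j).

Lemma Hs_term_zpair (s : R) (u : coeffs) (n : nat) :
  Hs_term s u n = zpair (wsq s (cmodf u)) n.
Proof.
  assert (Hw : forall k : Z, Z.abs k = Z.of_nat (S n) ->
                 weight s k ^ 2 = Rpower (INR (S n)) (2 * s)).
  { intros k Hk; unfold weight; rewrite Hk, <- INR_IZR_INZ.
    replace (2 * s) with (s + s) by ring; rewrite Rpower_plus; ring. }
  unfold Hs_term, zpair, wsq, cmodf; rewrite !Rpow_mult_distr, !Hw by lia; ring.
Qed.

Lemma Hs_norm2_wnorm2 (s : R) (u : coeffs) : Hs_norm2 s u = wnorm2 s (cmodf u).
Proof. apply Series_ext, Hs_term_zpair. Qed.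

Lemma ex_series_Hs_term_wsq (s : R) (u : coeffs) :
  ex_series (Hs_term s u) <-> ex_series (zpair (wsq s (cmodf u))).
Proof.
  split; apply ex_series_ext_R; intro n; rewrite Hs_term_zpair; auto.
Qed.

Lemma Hs_norm2_nonneg (s : R) (u : coeffs) : 0 <= Hs_norm2 s u.
Proof. rewrite Hs_norm2_wnorm2; apply wnorm2_nonneg. Qed.

Lemma Hs_norm2_le_of_majorant (s : R) (F : coeffs) (m : Z -> R) :
  (forall k, k <> 0%Z -> Cmod (F k) <= m k) -> ex_series (zpair (wsq s m)) ->
  ex_series (Hs_term s F) /\ Hs_norm2 s F <= wnorm2 s m.
Proof.
  intros HF Em; rewrite ex_series_Hs_term_wsq, Hs_norm2_wnorm2.
  apply Series_zpair_le; auto; intros k Hk; split; [apply wsq_nonneg|].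
  pose proof (weight_pos s k); pose proof (Cmod_ge_0 (F k)); pose proof (HF k Hk).
  unfold wsq, cmodf; apply pow_incr; split; [nra|]; apply Rmult_le_compat_l; lra.
Qed.

Lemma wnorm2_add_le (s : R) (m1 m2 : Z -> R) :
  ex_series (zpair (wsq s m1)) -> ex_series (zpair (wsq s m2)) ->
  ex_series (zpair (wsq s (fun k => m1 k + m2 k))) /\
  wnorm2 s (fun k => m1 k + m2 k) <= 2 * (wnorm2 s m1 + wnorm2 s m2).
Proof.
  intros E1 E2; unfold wnorm2.
  rewrite <- Series_plus, <- Series_scal_l by auto.
  rewrite (Series_ext (fun n => 2 * _) (zpair (fun k => 2 * (wsq s m1 k + wsq s m2 k))))
    by (intro; unfold zpair; ring).
  apply Series_zpair_le.
  - intros k _; split; [apply wsq_nonneg|unfold wsq].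
    pose proof (pow2_ge_0 (weight s k * m1 k - weight s k * m2 k)); nra.
  - apply (ex_series_ext_R (fun n => 2 * (zpair (wsq s m1) n + zpair (wsq s m2) n)));
      [intro; unfold zpair; ring|apply ex_series_scal_R, ex_series_plus_R; auto].
Qed.

Lemma ex_series_Hs_term_sub (s : R) (f g : coeffs) :
  ex_series (Hs_term s f) -> ex_series (Hs_term s g) -> ex_series (Hs_term s (csubf f g)).
Proof.
  intros Ef Eg; rewrite ex_series_Hs_term_wsq in Ef, Eg.
  apply (Hs_norm2_le_of_majorant s _ (fun k => cmodf f k + cmodf g k));
    [|apply wnorm2_add_le; auto].
  intros k _; unfold csubf, Cminus, cmodf.
  eapply Rle_trans; [apply Cmod_triangle|rewrite Cmod_opp; lra].
Qed.

Lemma ex_series_zsum_parts (g : Z -> C) : ex_series (zpair (cmodf g)) ->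
  ex_series (fun n => fst (g (Z.of_nat (S n))) + fst (g (- Z.of_nat (S n))%Z)) /\
  ex_series (fun n => snd (g (Z.of_nat (S n))) + snd (g (- Z.of_nat (S n))%Z)) /\
  Rabs (fst (zsum g)) <= Series (zpair (cmodf g)) /\
  Rabs (snd (zsum g)) <= Series (zpair (cmodf g)).
Proof.
  intros E.
  assert (Hfst : forall c : C, Rabs (fst c) <= Cmod c)
    by (intro c; pose proof (Rmax_Cmod c); pose proof (Rmax_l (Rabs (fst c)) (Rabs (snd c))); lra).
  assert (Hsnd : forall c : C, Rabs (snd c) <= Cmod c)
    by (intro c; pose proof (Rmax_Cmod c); pose proof (Rmax_r (Rabs (fst c)) (Rabs (snd c))); lra).
  assert (Hpart : forall p : C -> R, (forall c, Rabs (p c) <= Cmod c) ->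
            ex_series (fun n => p (g (Z.of_nat (S n))) + p (g (- Z.of_nat (S n))%Z)) /\
            Rabs (Series (fun n => p (g (Z.of_nat (S n))) + p (g (- Z.of_nat (S n))%Z)))
              <= Series (zpair (cmodf g))).
  { intros p Hp.
    assert (Hterm : forall n, 0 <= Rabs (p (g (Z.of_nat (S n))) + p (g (- Z.of_nat (S n))%Z))
                              <= zpair (cmodf g) n).
    { intro n; split; [apply Rabs_pos|]; eapply Rle_trans; [apply Rabs_triang|].
      apply Rplus_le_compat; apply Hp. }
    destruct (Series_le_ex _ _ Hterm E) as [Eabs Hle]; split; [apply ex_series_Rabs; auto|].
    eapply Rle_trans; [apply Series_Rabs; auto|auto]. }
  destruct (Hpart fst Hfst), (Hpart snd Hsnd); unfold zsum; simpl; tauto.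
Qed.

Lemma Cmod_zsum_le (g : Z -> C) : ex_series (zpair (cmodf g)) ->
  Cmod (zsum g) <= 2 * Series (zpair (cmodf g)).
Proof.
  intros E; destruct (ex_series_zsum_parts g E) as (_ & _ & H1 & H2).
  eapply Rle_trans; [apply Cmod_2Rmax|].
  assert (Hs2 : sqrt 2 <= 2) by (rewrite <- (sqrt_square 2) at 2 by lra; apply sqrt_le_1_alt; lra).
  pose proof (Rabs_pos (fst (zsum g))).
  apply Rmult_le_compat; [apply sqrt_pos|apply Rmax_case; apply Rabs_pos|auto|].
  apply Rmax_lub; auto.
Qed.

Lemma zsum_sub (g h : Z -> C) : ex_series (zpair (cmodf g)) -> ex_series (zpair (cmodf h)) ->
  Cminus (zsum g) (zsum h) = zsum (fun j => Cminus (g j) (h j)).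
Proof.
  intros Eg Eh.
  destruct (ex_series_zsum_parts g Eg) as (G1 & G2 & _).
  destruct (ex_series_zsum_parts h Eh) as (H1 & H2 & _).
  unfold zsum, Cminus, Cplus, Copp; cbn [fst snd]; f_equal; change (?x + - ?y) with (x - y);
    [rewrite <- (Series_minus _ _ G1 H1)|rewrite <- (Series_minus _ _ G2 H2)];
    apply Series_ext; intro; simpl; ring.
Qed.

(** * The bilinear operator [B2] *)

Definition B2_term (t : R) (phi psi : coeffs) (k j : Z) : C :=
  if (j =? k)%Z then 0%C else
  Cmult (Cmult (cexpi (3 * IZR k * IZR j * IZR (k - j) * t)) (RtoC (/ (IZR j * IZR (k - j)))))
        (Cmult (phi j) (psi (k - j)%Z)).

Lemma B2_eq (t : R) (phi psi : coeffs) (k : Z) :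
  B2 t phi psi k = if (k =? 0)%Z then 0%C else Cmult (RtoC (1 / 6)) (zsum (B2_term t phi psi k)).
Proof. reflexivity. Qed.

Lemma Cmod_cexpi (theta : R) : Cmod (cexpi theta) = 1.
Proof.
  unfold Cmod, cexpi; cbn [fst snd]; rewrite <- sqrt_1; f_equal.
  pose proof (sin2_cos2 theta); unfold Rsqr in *; lra.
Qed.

Lemma Cmod_B2_term_sub_le (t : R) (phi psi phi' psi' : coeffs) (k j : Z) :
  Cmod (Cminus (B2_term t phi psi k j) (B2_term t phi' psi' k j)) <=
  cmodf (csubf phi phi') j * cmodf psi (k - j) * kernel j (k - j)
  + cmodf phi' j * cmodf (csubf psi psi') (k - j) * kernel j (k - j).
Proof.
  pose proof (Cmod_ge_0 (csubf phi phi' j)); pose proof (Cmod_ge_0 (psi (k - j)%Z)).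
  pose proof (Cmod_ge_0 (phi' j)); pose proof (Cmod_ge_0 (csubf psi psi' (k - j)%Z)).
  pose proof (kernel_nonneg j (k - j)).
  unfold B2_term, cmodf, csubf; destruct (j =? k)%Z.
  - replace (Cminus 0 0) with (RtoC 0) by (apply injective_projections; simpl; ring).
    rewrite Cmod_0; apply Rplus_le_le_0_compat; repeat apply Rmult_le_pos; auto.
  - set (e := Cmult (cexpi (3 * IZR k * IZR j * IZR (k - j) * t)) (RtoC (/ (IZR j * IZR (k - j))))).
    assert (He : Cmod e = kernel j (k - j))
      by (unfold e; rewrite Cmod_mult, Cmod_cexpi, Cmod_R; unfold kernel; ring).
    replace (Cminus (Cmult e (Cmult (phi j) (psi (k - j)%Z)))
                    (Cmult e (Cmult (phi' j) (psi' (k - j)%Z))))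
      with (Cplus (Cmult e (Cmult (Cminus (phi j) (phi' j)) (psi (k - j)%Z)))
                  (Cmult e (Cmult (phi' j) (Cminus (psi (k - j)%Z) (psi' (k - j)%Z)))))
      by (apply injective_projections; simpl; ring).
    eapply Rle_trans; [apply Cmod_triangle|rewrite !Cmod_mult, He; lra].
Qed.

Lemma Cmod_B2_term_le (t : R) (phi psi : coeffs) (k j : Z) :
  Cmod (B2_term t phi psi k j) <= cmodf phi j * cmodf psi (k - j) * kernel j (k - j).
Proof.
  unfold B2_term, cmodf; destruct (j =? k)%Z.
  - rewrite Cmod_0; pose proof (Cmod_ge_0 (phi j)); pose proof (Cmod_ge_0 (psi (k - j)%Z)).
    pose proof (kernel_nonneg j (k - j)); repeat apply Rmult_le_pos; auto.
  - rewrite !Cmod_mult, Cmod_cexpi, Cmod_R; unfold kernel; lra.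
Qed.

Lemma ex_series_Cmod_B2_term (t : R) (phi psi : coeffs) (k : Z) :
  B2_majorant_ex (cmodf phi) (cmodf psi) k -> ex_series (zpair (cmodf (B2_term t phi psi k))).
Proof.
  apply Series_zpair_le; intros j _; split; [apply Cmod_ge_0|apply Cmod_B2_term_le].
Qed.

Lemma Cmod_B2_sub_le (t : R) (phi psi phi' psi' : coeffs) (k : Z) : k <> 0%Z ->
  B2_majorant_ex (cmodf phi) (cmodf psi) k -> B2_majorant_ex (cmodf phi') (cmodf psi') k ->
  B2_majorant_ex (cmodf (csubf phi phi')) (cmodf psi) k ->
  B2_majorant_ex (cmodf phi') (cmodf (csubf psi psi')) k ->
  Cmod (Cminus (B2 t phi psi k) (B2 t phi' psi' k)) <=
  / 3 * (B2_majorant (cmodf (csubf phi phi')) (cmodf psi) k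
         + B2_majorant (cmodf phi') (cmodf (csubf psi psi')) k).
Proof.
  intros Hk E E' Ed1 Ed2.
  rewrite !B2_eq; replace (k =? 0)%Z with false by (symmetry; apply Z.eqb_neq; auto).
  replace (Cminus (Cmult (RtoC (1 / 6)) (zsum (B2_term t phi psi k)))
                  (Cmult (RtoC (1 / 6)) (zsum (B2_term t phi' psi' k))))
    with (Cmult (RtoC (1 / 6)) (Cminus (zsum (B2_term t phi psi k)) (zsum (B2_term t phi' psi' k))))
    by (apply injective_projections; simpl; ring).
  rewrite zsum_sub by (apply ex_series_Cmod_B2_term; auto).
  rewrite Cmod_mult, Cmod_R, Rabs_pos_eq by lra.
  set (D := fun j => Cminus (B2_term t phi psi k j) (B2_term t phi' psi' k j)).
  destruct (Series_zpair_plus _ _ Ed1 Ed2) as [Esum Hsum].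
  destruct (Series_zpair_le (cmodf D) _
              (fun j _ => conj (Cmod_ge_0 _) (Cmod_B2_term_sub_le t phi psi phi' psi' k j)) Esum)
    as [ED HD].
  pose proof (Cmod_zsum_le D ED).
  unfold B2_majorant; rewrite <- Hsum; lra.
Qed.

Definition real_coeffs (u : coeffs) : Prop := forall k, Cconj (u k) = u (- k)%Z.

Lemma zsum_conj (g : Z -> C) : Cconj (zsum g) = zsum (fun j => Cconj (g j)).
Proof.
  unfold zsum, Cconj; simpl; f_equal; rewrite <- Series_opp; apply Series_ext; intro; simpl; ring.
Qed.

Lemma zsum_reflect (g : Z -> C) : zsum (fun j => g (- j)%Z) = zsum g.
Proof. unfold zsum; f_equal; apply Series_ext; intro n; rewrite Z.opp_involutive; ring. Qed.

Lemma zsum_ext (g h : Z -> C) : (forall j, g j = h j) -> zsum g = zsum h.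
Proof. intros H; unfold zsum; f_equal; apply Series_ext; intro; rewrite !H; auto. Qed.

Lemma B2_term_conj (t : R) (phi psi : coeffs) (k j : Z) :
  real_coeffs phi -> real_coeffs psi ->
  Cconj (B2_term t phi psi k j) = B2_term t phi psi (- k)%Z (- j)%Z.
Proof.
  intros Hphi Hpsi; unfold B2_term.
  destruct (Z.eqb_spec j k), (Z.eqb_spec (- j) (- k)); try lia;
    [apply injective_projections; simpl; ring|].
  replace (- k - - j)%Z with (- (k - j))%Z by lia.
  rewrite <- Hphi, <- Hpsi, !opp_IZR, !Cmult_conj.
  replace (3 * - IZR k * - IZR j * - IZR (k - j) * t)
    with (- (3 * IZR k * IZR j * IZR (k - j) * t)) by ring.
  replace (- IZR j * - IZR (k - j)) with (IZR j * IZR (k - j)) by ring.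
  f_equal; f_equal; [unfold cexpi, Cconj; simpl; rewrite cos_neg, sin_neg; auto|].
  apply injective_projections; simpl; ring.
Qed.

Lemma B2_conj (t : R) (phi psi : coeffs) (k : Z) :
  real_coeffs phi -> real_coeffs psi -> Cconj (B2 t phi psi k) = B2 t phi psi (- k)%Z.
Proof.
  intros Hphi Hpsi; rewrite !B2_eq.
  destruct (Z.eqb_spec k 0), (Z.eqb_spec (- k) 0); try lia;
    [apply injective_projections; simpl; ring|].
  rewrite Cmult_conj, zsum_conj, <- zsum_reflect.
  f_equal; [apply injective_projections; simpl; ring|].
  apply zsum_ext; intro j; rewrite B2_term_conj, Z.opp_involutive; auto.
Qed.

Lemma in_Hs_sub (s : R) (u v : coeffs) : in_Hs s u -> in_Hs s v -> in_Hs s (csubf u v).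
Proof.
  intros (Hu0 & Hu & Eu) (Hv0 & Hv & Ev); split; [|split].
  - unfold csubf; rewrite Hu0, Hv0; apply injective_projections; simpl; ring.
  - intro k; unfold csubf; rewrite Cminus_conj, Hu, Hv; auto.
  - apply ex_series_Hs_term_sub; auto.
Qed.

Lemma Hs_norm2_le_of_Cmod_le (s : R) (f g : coeffs) :
  (forall k, Cmod (f k) <= Cmod (g k)) -> ex_series (Hs_term s g) ->
  ex_series (Hs_term s f) /\ Hs_norm2 s f <= Hs_norm2 s g.
Proof.
  intros Hfg Eg; rewrite (Hs_norm2_wnorm2 s g); apply Hs_norm2_le_of_majorant; auto.
  apply ex_series_Hs_term_wsq; auto.
Qed.

Lemma Hs_norm2_le_in_Hs (s : R) (f g : coeffs) :
  (forall k, Cmod (f k) <= Cmod (g k)) -> in_Hs s g -> Hs_norm2 s f <= Hs_norm2 s g.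
Proof. intros Hfg (_ & _ & Eg); apply Hs_norm2_le_of_Cmod_le; auto. Qed.

Section Projections.
Variable N : nat.

Lemma Cmod_projP_sub_le (u u' : coeffs) (k : Z) :
  Cmod (csubf (projP N u) (projP N u') k) <= Cmod (csubf u u' k).
Proof.
  unfold csubf, projP; destruct (Z.abs k <=? Z.of_nat N)%Z; [lra|].
  replace (Cminus 0 0) with (RtoC 0) by (apply injective_projections; simpl; ring).
  rewrite Cmod_0; apply Cmod_ge_0.
Qed.

Lemma Cmod_projQ_sub_le (u u' : coeffs) (k : Z) :
  Cmod (csubf (projQ N u) (projQ N u') k) <= Cmod (csubf u u' k).
Proof.
  unfold csubf, projQ; destruct (Z.abs k <=? Z.of_nat N)%Z; [|lra].
  replace (Cminus 0 0) with (RtoC 0) by (apply injective_projections; simpl; ring).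
  rewrite Cmod_0; apply Cmod_ge_0.
Qed.

Lemma Cmod_projP_le (u : coeffs) (k : Z) : Cmod (projP N u k) <= Cmod (u k).
Proof.
  unfold projP; destruct (Z.abs k <=? Z.of_nat N)%Z; [lra|rewrite Cmod_0; apply Cmod_ge_0].
Qed.

Lemma Cmod_projQ_le (u : coeffs) (k : Z) : Cmod (projQ N u k) <= Cmod (u k).
Proof.
  unfold projQ; destruct (Z.abs k <=? Z.of_nat N)%Z; [rewrite Cmod_0; apply Cmod_ge_0|lra].
Qed.

Lemma in_Hs_projP (s : R) (u : coeffs) : in_Hs s u -> in_Hs s (projP N u).
Proof.
  intros (Hu0 & Hu & Eu); split; [|split].
  - unfold projP; destruct (Z.abs 0 <=? Z.of_nat N)%Z; auto.
  - intro k; unfold projP; rewrite Z.abs_opp; destruct (Z.abs k <=? Z.of_nat N)%Z; auto.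
    apply injective_projections; simpl; ring.
  - apply (Hs_norm2_le_of_Cmod_le s _ u); auto; apply Cmod_projP_le.
Qed.

Lemma in_Hs_projQ (s : R) (u : coeffs) : in_Hs s u -> in_Hs s (projQ N u).
Proof.
  intros (Hu0 & Hu & Eu); split; [|split].
  - unfold projQ; destruct (Z.abs 0 <=? Z.of_nat N)%Z; auto.
  - intro k; unfold projQ; rewrite Z.abs_opp; destruct (Z.abs k <=? Z.of_nat N)%Z; auto.
    apply injective_projections; simpl; ring.
  - apply (Hs_norm2_le_of_Cmod_le s _ u); auto; apply Cmod_projQ_le.
Qed.

End Projections.

(** * Estimates for [B2Q1] and [B2Q2] *)

(* Working with a pointwise majorant of [|F|] instead of [Hs_norm2 s F] itself makes sums and
   differences cheap: [|F + G| <= m1 + m2] needs no triangle inequality for the norm. *)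
Definition Hs_majorized (s : R) (F : coeffs) (E : R) : Prop :=
  exists m : Z -> R, (forall k, k <> 0%Z -> Cmod (F k) <= m k) /\
                     ex_series (zpair (wsq s m)) /\ wnorm2 s m <= E.

Lemma Hs_majorized_Hs_norm2 (s : R) (F : coeffs) (E : R) :
  Hs_majorized s F E -> ex_series (Hs_term s F) /\ Hs_norm2 s F <= E.
Proof.
  intros (m & HF & Em & HE); destruct (Hs_norm2_le_of_majorant s F m HF Em); split; auto; lra.
Qed.

Lemma Hs_majorized_ext (s : R) (F G : coeffs) (E : R) :
  (forall k, F k = G k) -> Hs_majorized s F E -> Hs_majorized s G E.
Proof. intros HFG (m & HF & Em & HE); exists m; split; auto; intros k Hk; rewrite <- HFG; auto. Qed.

Lemma Hs_majorized_combine (s : R) (F G H : coeffs) (E1 E2 : R) :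
  (forall k, Cmod (H k) <= Cmod (F k) + Cmod (G k)) ->
  Hs_majorized s F E1 -> Hs_majorized s G E2 -> Hs_majorized s H (2 * (E1 + E2)).
Proof.
  intros HH (m1 & H1 & E1m & HE1) (m2 & H2 & E2m & HE2).
  destruct (wnorm2_add_le s m1 m2 E1m E2m) as [Em HE].
  exists (fun k => m1 k + m2 k); split; [|split; auto; lra].
  intros k Hk; pose proof (HH k); pose proof (H1 k Hk); pose proof (H2 k Hk); lra.
Qed.

Lemma Hs_majorized_add (s : R) (F G : coeffs) (E1 E2 : R) :
  Hs_majorized s F E1 -> Hs_majorized s G E2 -> Hs_majorized s (caddf F G) (2 * (E1 + E2)).
Proof. apply Hs_majorized_combine; intro; apply Cmod_triangle. Qed.

Lemma Hs_majorized_sub (s : R) (F G : coeffs) (E1 E2 : R) :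
  Hs_majorized s F E1 -> Hs_majorized s G E2 -> Hs_majorized s (csubf F G) (2 * (E1 + E2)).
Proof.
  apply Hs_majorized_combine; intro k; unfold csubf, Cminus.
  eapply Rle_trans; [apply Cmod_triangle|rewrite Cmod_opp; lra].
Qed.

Definition high_freq (N : nat) (u : coeffs) : Prop :=
  forall j, (Z.abs j <= Z.of_nat N)%Z -> u j = 0%C.

Lemma high_freq_projQ (N : nat) (u : coeffs) : high_freq N (projQ N u).
Proof.
  intros j Hj; unfold projQ; replace (Z.abs j <=? Z.of_nat N)%Z with true; auto; symmetry; lia.
Qed.

Lemma high_freq_sub (N : nat) (u v : coeffs) :
  high_freq N u -> high_freq N v -> high_freq N (csubf u v).
Proof.
  intros Hu Hv j Hj; unfold csubf; rewrite Hu, Hv by auto.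
  apply injective_projections; simpl; ring.
Qed.

Section BilinearEstimate.
Variables (s : R) (N : nat) (t : R).
Hypotheses (s_nonneg : 0 <= s) (N_pos : (1 <= N)%nat).

Lemma wnorm2_B2_majorant_Hs (phi psi : coeffs) : in_Hs s phi -> in_Hs s psi ->
  high_freq N psi \/ high_freq N phi ->
  (forall k, k <> 0%Z -> B2_majorant_ex (cmodf phi) (cmodf psi) k) /\
  ex_series (zpair (wsq s (B2_majorant (cmodf phi) (cmodf psi)))) /\
  wnorm2 s (B2_majorant (cmodf phi) (cmodf psi))
    <= 4 * Rpower 2 s ^ 2 / INR N ^ 2 * Hs_norm2 s phi * Hs_norm2 s psi.
Proof.
  intros (_ & _ & Ephi) (Hpsi0 & _ & Epsi) Hhigh.
  rewrite !Hs_norm2_wnorm2; rewrite ex_series_Hs_term_wsq in Ephi, Epsi.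
  assert (Hcmod0 : forall (u : coeffs) j, u j = 0%C -> cmodf u j = 0)
    by (intros u j Hj; unfold cmodf; rewrite Hj; apply Cmod_0).
  apply wnorm2_B2_majorant_le; auto; try (intro; apply Cmod_ge_0).
  destruct Hhigh as [H|H]; [left|right]; intros j Hj; apply Hcmod0, H, Hj.
Qed.

Lemma B2_sub_Hs_majorized (phi psi phi' psi' : coeffs) :
  in_Hs s phi -> in_Hs s psi -> in_Hs s phi' -> in_Hs s psi' ->
  (high_freq N psi /\ high_freq N psi') \/ (high_freq N phi /\ high_freq N phi') ->
  Hs_majorized s (csubf (B2 t phi psi) (B2 t phi' psi'))
    (2 * (4 * Rpower 2 s ^ 2 / INR N ^ 2) *
       (Hs_norm2 s (csubf phi phi') * Hs_norm2 s psi
        + Hs_norm2 s phi' * Hs_norm2 s (csubf psi psi'))).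
Proof.
  intros Hphi Hpsi Hphi' Hpsi' Hhigh.
  pose proof (in_Hs_sub s _ _ Hphi Hphi') as Hdphi.
  pose proof (in_Hs_sub s _ _ Hpsi Hpsi') as Hdpsi.
  destruct (wnorm2_B2_majorant_Hs phi psi Hphi Hpsi) as (E & _); [tauto|].
  destruct (wnorm2_B2_majorant_Hs phi' psi' Hphi' Hpsi') as (E' & _); [tauto|].
  destruct (wnorm2_B2_majorant_Hs _ psi Hdphi Hpsi) as (Ed1 & Em1 & Hm1);
    [destruct Hhigh as [[]|[]]; [left|right]; auto; apply high_freq_sub; auto|].
  destruct (wnorm2_B2_majorant_Hs phi' _ Hphi' Hdpsi) as (Ed2 & Em2 & Hm2);
    [destruct Hhigh as [[]|[]]; [left|right]; auto; apply high_freq_sub; auto|].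
  destruct (wnorm2_add_le s _ _ Em1 Em2) as [Em Hm].
  eexists; split; [|split; [apply Em|]].
  - intros k Hk; unfold csubf at 1.
    eapply Rle_trans; [apply Cmod_B2_sub_le; auto|].
    assert (Hc : forall (u : coeffs) j, 0 <= cmodf u j) by (intros; apply Cmod_ge_0).
    pose proof (B2_majorant_nonneg _ _ k (Hc (csubf phi phi')) (Hc psi)).
    pose proof (B2_majorant_nonneg _ _ k (Hc phi') (Hc (csubf psi psi'))).
    lra.
  - eapply Rle_trans; [apply Hm|]; nra.
Qed.

End BilinearEstimate.

Lemma Hs_majorized_le (s : R) (F : coeffs) (E E' : R) :
  E <= E' -> Hs_majorized s F E -> Hs_majorized s F E'.
Proof. intros HE (m & HF & Em & Hm); exists m; repeat split; auto; lra. Qed.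

Section Brackets.
Variables (s : R) (N : nat) (t D X : R).
Hypotheses (s_nonneg : 0 <= s) (N_pos : (1 <= N)%nat).
Variables f g f' g' : coeffs.
Hypotheses (Hf : in_Hs s f) (Hg : in_Hs s g) (Hf' : in_Hs s f') (Hg' : in_Hs s g').
Hypotheses (Hdf : Hs_norm2 s (csubf f f') <= D) (Hdg : Hs_norm2 s (csubf g g') <= D).
Hypotheses (HgX : Hs_norm2 s g <= X) (Hf'X : Hs_norm2 s f' <= X).

Let E := 2 * (4 * Rpower 2 s ^ 2 / INR N ^ 2) * (2 * D * X).

Lemma bracket_bound_le (a b c d : R) : 0 <= a -> 0 <= b -> 0 <= c -> 0 <= d ->
  a <= D -> b <= X -> c <= X -> d <= D ->
  2 * (4 * Rpower 2 s ^ 2 / INR N ^ 2) * (a * b + c * d) <= E.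
Proof.
  intros; unfold E; apply Rmult_le_compat_l.
  - apply Rmult_le_pos; [lra|]; apply Rle_mult_inv_pos; [|apply pow_lt, lt_0_INR; lia].
    apply Rmult_le_pos; [lra|apply pow2_ge_0].
  - assert (a * b <= D * X) by (apply Rmult_le_compat; auto).
    assert (c * d <= X * D) by (apply Rmult_le_compat; auto); lra.
Qed.

Lemma B2_PQ_sub_majorized :
  Hs_majorized s (csubf (B2 t (projP N f) (projQ N g)) (B2 t (projP N f') (projQ N g'))) E.
Proof.
  eapply Hs_majorized_le;
    [|apply (B2_sub_Hs_majorized s N t s_nonneg N_pos); auto using in_Hs_projP, in_Hs_projQ;
      left; split; apply high_freq_projQ].
  pose proof (Hs_norm2_le_in_Hs s _ _ (Cmod_projP_sub_le N f f') (in_Hs_sub s _ _ Hf Hf')).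
  pose proof (Hs_norm2_le_in_Hs s _ _ (Cmod_projQ_sub_le N g g') (in_Hs_sub s _ _ Hg Hg')).
  pose proof (Hs_norm2_le_in_Hs s _ _ (Cmod_projQ_le N g) Hg).
  pose proof (Hs_norm2_le_in_Hs s _ _ (Cmod_projP_le N f') Hf').
  apply bracket_bound_le; try apply Hs_norm2_nonneg; lra.
Qed.

Lemma B2_Q_sub_majorized :
  Hs_majorized s (csubf (B2 t (projQ N f) g) (B2 t (projQ N f') g')) E.
Proof.
  eapply Hs_majorized_le;
    [|apply (B2_sub_Hs_majorized s N t s_nonneg N_pos); auto using in_Hs_projQ;
      right; split; apply high_freq_projQ].
  pose proof (Hs_norm2_le_in_Hs s _ _ (Cmod_projQ_sub_le N f f') (in_Hs_sub s _ _ Hf Hf')).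
  pose proof (Hs_norm2_le_in_Hs s _ _ (Cmod_projQ_le N f') Hf').
  apply bracket_bound_le; try apply Hs_norm2_nonneg; lra.
Qed.

End Brackets.

Lemma Hs_majorized_four_brackets (s E : R) (A B C D A' B' C' D' : coeffs) :
  Hs_majorized s (csubf A A') E -> Hs_majorized s (csubf B B') E ->
  Hs_majorized s (csubf C C') E -> Hs_majorized s (csubf D D') E ->
  Hs_majorized s (csubf (csubf (caddf A B) (caddf C D)) (csubf (caddf A' B') (caddf C' D')))
    (16 * E).
Proof.
  intros HA HB HC HD.
  eapply Hs_majorized_le;
    [|eapply Hs_majorized_ext;
       [|exact (Hs_majorized_sub s _ _ _ _ (Hs_majorized_add s _ _ _ _ HA HB)
                                           (Hs_majorized_add s _ _ _ _ HC HD))]].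
  - right; ring.
  - intro k; unfold csubf, caddf; apply injective_projections; simpl; ring.
Qed.

Section B2QDifference.
Variables (s : R) (N : nat) (t : R) (u v u' v' : coeffs).
Hypotheses (s_nonneg : 0 <= s) (N_pos : (1 <= N)%nat).
Hypotheses (Hu : in_Hs s u) (Hv : in_Hs s v) (Hu' : in_Hs s u') (Hv' : in_Hs s v').

Let D := Hs_norm2 s (csubf u u') + Hs_norm2 s (csubf v v').
Let X := Hs_norm2 s u + Hs_norm2 s v + (Hs_norm2 s u' + Hs_norm2 s v').
Let E := 2 * (4 * Rpower 2 s ^ 2 / INR N ^ 2) * (2 * D * X).

Lemma norms_le_D_X :
  (Hs_norm2 s (csubf u u') <= D /\ Hs_norm2 s (csubf v v') <= D) /\
  (Hs_norm2 s u <= X /\ Hs_norm2 s v <= X /\ Hs_norm2 s u' <= X /\ Hs_norm2 s v' <= X).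
Proof.
  unfold D, X; pose proof (Hs_norm2_nonneg s).
  pose proof (H u); pose proof (H v); pose proof (H u'); pose proof (H v');
  pose proof (H (csubf u u')); pose proof (H (csubf v v')); lra.
Qed.

Lemma B2Q1_sub_majorized : Hs_majorized s (csubf (B2Q1 N t u v) (B2Q1 N t u' v')) (16 * E).
Proof.
  destruct norms_le_D_X as ((? & ?) & ? & ? & ? & ?).
  apply Hs_majorized_four_brackets;
    [apply (B2_PQ_sub_majorized s N t D X) | apply (B2_Q_sub_majorized s N t D X)
    |apply (B2_PQ_sub_majorized s N t D X) | apply (B2_Q_sub_majorized s N t D X)]; auto.
Qed.

Lemma B2Q2_sub_majorized : Hs_majorized s (csubf (B2Q2 N t u v) (B2Q2 N t u' v')) (16 * E).
Proof.
  destruct norms_le_D_X as ((? & ?) & ? & ? & ? & ?).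
  apply Hs_majorized_four_brackets;
    [apply (B2_PQ_sub_majorized s N t D X) | apply (B2_Q_sub_majorized s N t D X)
    |apply (B2_PQ_sub_majorized s N t D X) | apply (B2_Q_sub_majorized s N t D X)]; auto.
Qed.

Lemma B2Q_sub_Hs_norm2_le :
  ex_series (Hs_term s (csubf (B2Q1 N t u v) (B2Q1 N t u' v'))) /\
  ex_series (Hs_term s (csubf (B2Q2 N t u v) (B2Q2 N t u' v'))) /\
  Hs_norm2 s (csubf (B2Q1 N t u v) (B2Q1 N t u' v'))
    + Hs_norm2 s (csubf (B2Q2 N t u v) (B2Q2 N t u' v'))
    <= 512 * Rpower 2 s ^ 2 / INR N ^ 2 * D * X.
Proof.
  destruct (Hs_majorized_Hs_norm2 _ _ _ B2Q1_sub_majorized) as [E1 H1].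
  destruct (Hs_majorized_Hs_norm2 _ _ _ B2Q2_sub_majorized) as [E2 H2].
  repeat split; auto; unfold E in *; lra.
Qed.

End B2QDifference.

Definition czero : coeffs := fun _ => 0%C.

Lemma Series_zero : Series (fun _ => 0) = 0.
Proof. rewrite (Series_ext _ (fun _ => 0 * 0)), Series_scal_l by (intro; ring); ring. Qed.

Lemma in_Hs_czero (s : R) : in_Hs s czero.
Proof.
  split; [auto|split]; [intro; apply injective_projections; simpl; ring|].
  apply (ex_series_ext_R (fun n => 0 * zpair inv_sq n));
    [intro; unfold Hs_term, czero; rewrite Cmod_0; ring|].
  apply ex_series_scal_R, Series_zpair_inv_sq_le.
Qed.

Lemma Hs_term_sub_zero (s : R) (F G : coeffs) :
  (forall k, G k = 0%C) -> forall n, Hs_term s (csubf F G) n = Hs_term s F n.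
Proof.
  intros HG n; unfold Hs_term, csubf; rewrite !HG.
  do 2 f_equal; f_equal; f_equal; apply injective_projections; simpl; ring.
Qed.

Lemma Hs2_norm_sub_zero (s : R) (F G F' G' : coeffs) :
  (forall k, G k = 0%C) -> (forall k, G' k = 0%C) ->
  Hs2_norm s (csubf F G) (csubf F' G') = Hs2_norm s F F'.
Proof.
  intros HG HG'; unfold Hs2_norm, Hs_norm2.
  rewrite (Series_ext _ _ (Hs_term_sub_zero s F G HG)).
  rewrite (Series_ext _ _ (Hs_term_sub_zero s F' G' HG')); reflexivity.
Qed.

Lemma Hs2_norm_czero (s : R) : Hs2_norm s czero czero = 0.
Proof.
  unfold Hs2_norm, Hs_norm2.
  rewrite (Series_ext _ (fun _ => 0)), Series_zero, Rplus_0_r, sqrt_0; auto.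
  intro; unfold Hs_term, czero; rewrite Cmod_0; ring.
Qed.

Lemma B2_zero_r (t : R) (phi psi : coeffs) (k : Z) :
  (forall j, psi j = 0%C) -> B2 t phi psi k = 0%C.
Proof.
  intros Hpsi; rewrite B2_eq; destruct (k =? 0)%Z; auto.
  rewrite (zsum_ext _ (fun _ => 0%C)).
  - unfold zsum; simpl.
    rewrite (Series_ext (fun _ => 0 + 0) (fun _ => 0)), Series_zero by (intro; ring).
    apply injective_projections; simpl; ring.
  - intro j; unfold B2_term; rewrite Hpsi; destruct (j =? k)%Z; auto.
    apply injective_projections; simpl; ring.
Qed.

Lemma B2Q_czero (N : nat) (t : R) (k : Z) :
  B2Q1 N t czero czero k = 0%C /\ B2Q2 N t czero czero k = 0%C.
Proof.
  assert (HQ : forall j, projQ N czero j = 0%C)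
    by (intro j; unfold projQ, czero; destruct (Z.abs j <=? Z.of_nat N)%Z; auto).
  unfold B2Q1, B2Q2, csubf, caddf.
  rewrite !(B2_zero_r t _ _ k HQ), !(B2_zero_r t _ czero k) by auto.
  split; apply injective_projections; simpl; ring.
Qed.

Lemma real_coeffs_caddf (f g : coeffs) :
  real_coeffs f -> real_coeffs g -> real_coeffs (caddf f g).
Proof. intros Hf Hg k; unfold caddf; rewrite Cplus_conj, Hf, Hg; auto. Qed.

Lemma real_coeffs_csubf (f g : coeffs) :
  real_coeffs f -> real_coeffs g -> real_coeffs (csubf f g).
Proof. intros Hf Hg k; unfold csubf; rewrite Cminus_conj, Hf, Hg; auto. Qed.

Lemma in_Hs_B2Q (s : R) (N : nat) (t : R) (u v : coeffs) : in_Hs s u -> in_Hs s v ->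
  ex_series (Hs_term s (B2Q1 N t u v)) -> ex_series (Hs_term s (B2Q2 N t u v)) ->
  in_Hs s (B2Q1 N t u v) /\ in_Hs s (B2Q2 N t u v).
Proof.
  intros Hu Hv E1 E2.
  assert (HB : forall phi psi, in_Hs s phi -> in_Hs s psi -> real_coeffs (B2 t phi psi))
    by (intros phi psi (_ & ? & _) (_ & ? & _) k; apply B2_conj; auto).
  pose proof (in_Hs_projP N s u Hu); pose proof (in_Hs_projQ N s u Hu).
  pose proof (in_Hs_projP N s v Hv); pose proof (in_Hs_projQ N s v Hv).
  split; (split; [|split; auto]);
    try (unfold B2Q1, B2Q2, csubf, caddf; rewrite !B2_eq; simpl;
         apply injective_projections; simpl; ring);
    repeat (apply real_coeffs_csubf || apply real_coeffs_caddf); apply HB; auto.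
Qed.

Lemma sqrt_le_of_le_mul (c n L D X X' : R) : 0 <= c -> 0 < n -> 0 <= D -> 0 <= X -> 0 <= X' ->
  L <= c / n ^ 2 * D * (X + X') -> sqrt L <= sqrt c * (1 / n) * sqrt D * (sqrt X + sqrt X').
Proof.
  intros Hc Hn HD HX HX' HL.
  pose proof (sqrt_pos X); pose proof (sqrt_pos X'); pose proof (sqrt_pos D).
  pose proof (sqrt_sqrt X HX); pose proof (sqrt_sqrt X' HX'); pose proof (sqrt_sqrt D HD).
  replace (sqrt c * (1 / n) * sqrt D * (sqrt X + sqrt X'))
    with (sqrt (c / n ^ 2) * (sqrt D * (sqrt X + sqrt X')))
    by (rewrite sqrt_div_alt, sqrt_pow2 by (try apply pow_lt; lra); field; lra).
  rewrite <- (sqrt_pow2 (sqrt D * (sqrt X + sqrt X'))) by nra.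
  rewrite <- sqrt_mult_alt by (apply Rle_mult_inv_pos; [|apply pow_lt]; lra).
  apply sqrt_le_1_alt; eapply Rle_trans; [apply HL|].
  rewrite Rmult_assoc; apply Rmult_le_compat_l; [apply Rle_mult_inv_pos; [|apply pow_lt]; lra|].
  replace ((sqrt D * (sqrt X + sqrt X')) ^ 2) with (D * (sqrt X + sqrt X') ^ 2) by nra.
  apply Rmult_le_compat_l; nra.
Qed.

Lemma Hs2_norm_B2Q_sub_le (s : R) (N : nat) (t : R) (u v u' v' : coeffs) :
  0 <= s -> (1 <= N)%nat -> in_Hs s u -> in_Hs s v -> in_Hs s u' -> in_Hs s v' ->
  Hs2_norm s (csubf (B2Q1 N t u v) (B2Q1 N t u' v')) (csubf (B2Q2 N t u v) (B2Q2 N t u' v'))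
    <= sqrt (512 * Rpower 2 s ^ 2) * (1 / INR N) * Hs2_norm s (csubf u u') (csubf v v')
       * (Hs2_norm s u v + Hs2_norm s u' v').
Proof.
  intros Hs HN Hu Hv Hu' Hv'.
  destruct (B2Q_sub_Hs_norm2_le s N t u v u' v' Hs HN Hu Hv Hu' Hv') as (_ & _ & Hle).
  pose proof (Hs_norm2_nonneg s) as Hn.
  apply sqrt_le_of_le_mul; try (apply Rplus_le_le_0_compat; apply Hn); [| |exact Hle].
  - pose proof (pow2_ge_0 (Rpower 2 s)); lra.
  - apply lt_0_INR; lia.
Qed.

Theorem lemma6p2 (s : R) (hs : 0 <= s) :
  (forall (N : nat) (t : R) (u v : coeffs),
      (1 <= N)%nat -> in_Hs s u -> in_Hs s v ->
      in_Hs s (B2Q1 N t u v) /\ in_Hs s (B2Q2 N t u v)) /\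
  exists Cs : R,
    forall (N : nat) (t : R) (u v u' v' : coeffs),
      (1 <= N)%nat ->
      in_Hs s u -> in_Hs s v -> in_Hs s u' -> in_Hs s v' ->
      Hs2_norm s (B2Q1 N t u v) (B2Q2 N t u v)
        <= Cs * (1 / INR N) * (Hs2_norm s u v) ^ 2 /\
      Hs2_norm s (csubf (B2Q1 N t u v) (B2Q1 N t u' v'))
                 (csubf (B2Q2 N t u v) (B2Q2 N t u' v'))
        <= Cs * (1 / INR N) * Hs2_norm s (csubf u u') (csubf v v')
           * (Hs2_norm s u v + Hs2_norm s u' v').
Proof.
  (* Both the membership and the first bound are the difference estimate against [(0, 0)]. *)
  assert (Hzero : forall N t, (forall k, B2Q1 N t czero czero k = 0%C) /\
                              (forall k, B2Q2 N t czero czero k = 0%C))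
    by (intros N t; split; intro k; apply B2Q_czero).
  split.
  - intros N t u v HN Hu Hv; destruct (Hzero N t) as [Z1 Z2].
    destruct (B2Q_sub_Hs_norm2_le s N t u v czero czero hs HN Hu Hv (in_Hs_czero s) (in_Hs_czero s))
      as (E1 & E2 & _).
    apply in_Hs_B2Q; auto; eapply ex_series_ext_R; try apply Hs_term_sub_zero; eauto.
  - exists (sqrt (512 * Rpower 2 s ^ 2)); intros N t u v u' v' HN Hu Hv Hu' Hv'.
    split; [|apply Hs2_norm_B2Q_sub_le; auto].
    destruct (Hzero N t) as [Z1 Z2].
    pose proof (Hs2_norm_B2Q_sub_le s N t u v czero czero hs HN Hu Hv
                  (in_Hs_czero s) (in_Hs_czero s)) as Hle.
    rewrite !Hs2_norm_sub_zero, Hs2_norm_czero, Rplus_0_r in Hle by (auto; intro; reflexivity).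
    eapply Rle_trans; [exact Hle|right; ring].
Qed.
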